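(* Let $n\geq2$ be finite, let $\mathfrak{A}\in TA_n$ be countable and let $X\subseteq A$ satisfy $\prod X=0$. Then there are a permutable set $V$ and an injective homomorphism $f:\mathfrak{A}\to\wp(V)$ such that $\bigcap_{x\in X}f(x)=\emptyset$.
   Context: $TA_n=\mathbf{Mod}(\Sigma_n)$, where $\Sigma_n$ consists of the Boolean algebra axioms, the equations saying each $s_{ij}$ ($i\neq j<n$) is a Boolean endomorphism, and $t_1(x)=t_2(x)$ for all words $t_1,t_2$ in the $s_{ij}$ whose associated compositions of transpositions $[i,j]$ coincide in $S_n$. A set $V\subseteq{}^nU$ is permutable if $s\circ[i,j]\in V$ whenever $s\in V$, $i\neq j<n$. $\wp(V)=\langle\mathcal P(V);\cap,-,S_{ij}\rangle$ with complement relative to $V$ and $S_{ij}(Y)=\{q\in V:q\circ[i,j]\in Y\}$. *)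

From HB Require Import structures.
From mathcomp Require Import all_boot all_order all_fingroup.
Set Implicit Arguments. Unset Strict Implicit. Unset Printing Implicit Defensive.
Import Order.TTheory.
Local Open Scope order_scope.

Definition word_ok (n : nat) (w : seq ('I_n * 'I_n)) : bool :=
  all (fun p => p.1 != p.2) w.

Definition eval_word (n : nat) (A : Type) (s : 'I_n -> 'I_n -> A -> A)
  (w : seq ('I_n * 'I_n)) (x : A) : A :=
  foldr (fun p y => s p.1 p.2 y) x w.

Definition perm_of_word (n : nat) (w : seq ('I_n * 'I_n)) : 'S_n :=
  foldr (fun p g => (tperm p.1 p.2 * g)%g) 1%g w.

(* A in TA_n: A is a Boolean algebra (complemented distributive lattice with
   top and bottom), each s_ij (i <> j) is a Boolean endomorphism, and
   t1(x) = t2(x) whenever the words t1, t2 induce the same permutation. *)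
Definition is_TA (n : nat) (d : Order.disp_t) (A : ctbDistrLatticeType d)
  (s : 'I_n -> 'I_n -> A -> A) : Prop :=
  (forall (i j : 'I_n), i != j -> forall x y : A, s i j (x `&` y) = s i j x `&` s i j y)
  /\ (forall (i j : 'I_n), i != j -> forall x : A, s i j (~` x) = ~` (s i j x))
  /\ (forall w1 w2 : seq ('I_n * 'I_n), word_ok w1 -> word_ok w2 ->
        perm_of_word w1 = perm_of_word w2 ->
        forall x : A, eval_word s w1 x = eval_word s w2 x).

Definition countable_type (A : Type) : Prop :=
  exists g : A -> nat, injective g.

(* prod X = 0 : the infimum of X exists and is the bottom element. *)
Definition inf_is_bot (d : Order.disp_t) (A : ctbDistrLatticeType d) (X : A -> Prop) : Prop :=
  forall a : A, (forall x, X x -> a <= x) -> a = \bot.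

Definition permutable (n : nat) (U : Type) (V : ('I_n -> U) -> Prop) : Prop :=
  forall q, V q -> forall (i j : 'I_n), i != j -> V (fun k => q (tperm i j k)).

(* f : A -> wp(V) is a homomorphism (subsets of V, preserving meet,
   complement relative to V, and S_ij). Sets are predicates, compared
   extensionally. *)
Definition hom_to_wp (n : nat) (d : Order.disp_t) (A : ctbDistrLatticeType d)
  (s : 'I_n -> 'I_n -> A -> A) (U : Type) (V : ('I_n -> U) -> Prop)
  (f : A -> ('I_n -> U) -> Prop) : Prop :=
  (forall a q, f a q -> V q)
  /\ (forall a b q, f (a `&` b) q <-> (f a q /\ f b q))
  /\ (forall a q, f (~` a) q <-> (V q /\ ~ f a q))
  /\ (forall (i j : 'I_n), i != j -> forall a q,
        f (s i j a) q <-> (V q /\ f a (fun k => q (tperm i j k)))).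

Definition injective_wp (n : nat) (A : Type) (U : Type) (f : A -> ('I_n -> U) -> Prop) : Prop :=
  forall a b, (forall q, f a q <-> f b q) -> a = b.

(* For a permutation σ of n let t_σ be the endomorphism of A
   given by any word in the s_ij whose composition of transpositions is σ^-1;
   these form a (right) action of S_n by Boolean automorphisms.  A countable
   Boolean algebra has, below every nonzero b, an ultrafilter containing b,
   built by deciding the enumerated elements one after the other.  Since
   prod X = 0 and S_n is finite, below every nonzero b there is a nonzero
   "good" element a: one lying below ~ t_σ(x_σ) for some x_σ ∈ X, for every σ.
   The base U consists of pairs (a, k) with a good and k < n; the points are
   the sequences k |-> (a, σ k), and such a point belongs to f(c) exactly when
   t_σ c lies in the ultrafilter generated by a.  The ultrafilter properties
   give a homomorphism, injectivity comes from points (a, id) with a good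
   below c - c', and goodness of a makes the point (a, σ) miss some t_σ x. *)

From HB Require Import structures.
From mathcomp Require Import all_boot all_order all_fingroup.
From Stdlib Require Import Setoid Classical ClassicalEpsilon.

Set Implicit Arguments. Unset Strict Implicit. Unset Printing Implicit Defensive.

Import Order.Theory.
Local Open Scope order_scope.

Lemma meet_compl_eq0 (d : Order.disp_t) (A : ctbDistrLatticeType d) (b c : A) :
  (b `&` ~` c == \bot) = (b <= c).
Proof. by rewrite disj_leC complK. Qed.

Section PermutationAction.

Variables (n : nat) (d : Order.disp_t) (A : ctbDistrLatticeType d)
  (s : 'I_n -> 'I_n -> A -> A).
Hypothesis hTA : is_TA s.

Lemma perm_of_word_cat (w1 w2 : seq ('I_n * 'I_n)) :
  perm_of_word (w1 ++ w2) = (perm_of_word w1 * perm_of_word w2)%g.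
Proof. by elim: w1 => [|p w IH] /=; rewrite ?mul1g // IH mulgA. Qed.

Lemma eval_word_cat (w1 w2 : seq ('I_n * 'I_n)) (x : A) :
  eval_word s (w1 ++ w2) x = eval_word s w1 (eval_word s w2 x).
Proof. by rewrite /eval_word foldr_cat. Qed.

Definition word_for (σ : 'S_n) : seq ('I_n * 'I_n) := s2val (prod_tpermP σ).

Lemma word_for_ok (σ : 'S_n) : word_ok (word_for σ).
Proof. by rewrite /word_for; case: prod_tpermP. Qed.

Lemma word_for_perm (σ : 'S_n) : perm_of_word (word_for σ) = σ.
Proof.
rewrite /word_for; case: prod_tpermP => ts E _ /=; rewrite [RHS]E {E}.
by elim: ts => [|p ts IH]; rewrite ?big_nil ?big_cons //= IH.
Qed.

(* The substitution t_σ, a word for σ^-1 applied to c; by the TA_n axioms it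
   does not depend on the word chosen. *)
Definition act (σ : 'S_n) (c : A) : A := eval_word s (word_for σ^-1) c.

Lemma act_word (σ : 'S_n) (w : seq ('I_n * 'I_n)) (c : A) :
  word_ok w -> perm_of_word w = σ^-1%g -> act σ c = eval_word s w c.
Proof.
by move=> ok pw; apply: hTA.2.2; rewrite ?word_for_ok ?word_for_perm ?pw.
Qed.

Lemma eval_word_meet (w : seq ('I_n * 'I_n)) (x y : A) : word_ok w ->
  eval_word s w (x `&` y) = eval_word s w x `&` eval_word s w y.
Proof. by elim: w => [|p w IH] //= /andP[hp hw]; rewrite IH // hTA.1. Qed.

Lemma eval_word_compl (w : seq ('I_n * 'I_n)) (x : A) : word_ok w ->
  eval_word s w (~` x) = ~` eval_word s w x.
Proof. by elim: w => [|p w IH] //= /andP[hp hw]; rewrite IH // hTA.2.1. Qed.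

Lemma act_meet (σ : 'S_n) (x y : A) : act σ (x `&` y) = act σ x `&` act σ y.
Proof. exact: eval_word_meet (word_for_ok _). Qed.

Lemma act_compl (σ : 'S_n) (x : A) : act σ (~` x) = ~` act σ x.
Proof. exact: eval_word_compl (word_for_ok _). Qed.

Lemma act_mono (σ : 'S_n) (x y : A) : x <= y -> act σ x <= act σ y.
Proof. by move/meet_idPl <-; rewrite act_meet leIr. Qed.

Lemma act_bot (σ : 'S_n) : act σ \bot = \bot.
Proof. by have := act_meet σ \bot (~` \bot); rewrite act_compl !meetxC. Qed.

Lemma act1 (c : A) : act 1%g c = c.
Proof. by rewrite (@act_word 1%g [::]) //= invg1. Qed.

Lemma actKV (σ : 'S_n) (c : A) : act σ (act σ^-1 c) = c.
Proof.
rewrite -[RHS]act1 (@act_word 1%g (word_for σ^-1 ++ word_for σ^-1^-1)).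
- by rewrite eval_word_cat.
- by rewrite /word_ok all_cat; apply/andP; split; apply: word_for_ok.
- by rewrite perm_of_word_cat !word_for_perm invgK mulVg invg1.
Qed.

Lemma actK (σ : 'S_n) (c : A) : act σ^-1 (act σ c) = c.
Proof. by rewrite -{2}(invgK σ) actKV. Qed.

Lemma act_tperm (i j : 'I_n) (σ : 'S_n) (c : A) :
  i != j -> act (tperm i j * σ) c = act σ (s i j c).
Proof.
move=> hij; rewrite (@act_word _ (word_for σ^-1 ++ [:: (i, j)])) ?eval_word_cat //.
- by rewrite /word_ok all_cat; apply/andP; split; [apply: word_for_ok | rewrite /= hij].
- by rewrite perm_of_word_cat word_for_perm /= mulg1 invMg tpermV.
Qed.

End PermutationAction.

Section CountableUltrafilter.

(* In a countable Boolean algebra every nonzero b lies in an ultrafilter: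
   refine b along an enumeration, keeping or complementing each element. *)
Variables (d : Order.disp_t) (A : ctbDistrLatticeType d) (g : A -> nat).
Hypothesis hg : injective g.

Definition enumA (k : nat) : A := epsilon (inhabits \bot) (fun c => g c = k).

Lemma enumA_g (c : A) : enumA (g c) = c.
Proof.
by apply: hg; apply: (epsilon_spec (inhabits \bot) (fun c' => g c' = g c)); exists c.
Qed.

Fixpoint chain (b : A) (k : nat) : A :=
  if k is k'.+1 then
    if chain b k' `&` enumA k' != \bot then chain b k' `&` enumA k'
    else chain b k' `&` ~` enumA k'
  else b.

Lemma chain_neq0 (b : A) (k : nat) : b != \bot -> chain b k != \bot.
Proof.
move=> nb; elim: k => //= k IH; case: ifP => // /negbFE.
by rewrite disj_leC => /meet_idPl ->.
Qed.

Lemma chain_mono (b : A) (m k : nat) : (m <= k)%N -> chain b k <= chain b m.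
Proof.
elim: k => [|k IH]; first by rewrite leqn0 => /eqP ->.
rewrite leq_eqVlt ltnS => /orP[/eqP -> // | /IH]; apply: le_trans.
by rewrite /=; case: ifP => _; apply: leIl.
Qed.

Definition UF (b c : A) : Prop := exists k, chain b k <= c.

Lemma UF_base (b c : A) : b <= c -> UF b c.
Proof. by exists 0. Qed.

Lemma UF_meet (b c c' : A) : UF b (c `&` c') <-> UF b c /\ UF b c'.
Proof.
split=> [[k H] | [[k1 H1] [k2 H2]]].
  by split; exists k; apply: le_trans H _; rewrite ?leIl ?leIr.
exists (maxn k1 k2); rewrite lexI.
by rewrite (le_trans _ H1) ?(le_trans _ H2) // chain_mono // ?leq_maxl ?leq_maxr.
Qed.

Lemma UF_compl (b c : A) : b != \bot -> UF b (~` c) <-> ~ UF b c.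
Proof.
move=> nb; split=> [Hn Hc | Hn].
  have [k] := proj2 (UF_meet b c (~` c)) (conj Hc Hn).
  by rewrite meetxC lex0 => /eqP E; move: (chain_neq0 k nb); rewrite E eqxx.
exists (g c).+1 => /=; rewrite enumA_g; case: ifP => E; last exact: leIr.
by case: Hn; exists (g c).+1 => /=; rewrite enumA_g E; apply: leIr.
Qed.

End CountableUltrafilter.

Section GoodElements.

Variables (n : nat) (d : Order.disp_t) (A : ctbDistrLatticeType d)
  (s : 'I_n -> 'I_n -> A -> A).
Hypothesis hTA : is_TA s.
Variables (X : A -> Prop).
Hypothesis hX : inf_is_bot X.

(* Since t_σ is an automorphism, prod X = 0 gives prod t_σ(X) = 0, so a
   nonzero b is not below all of t_σ(X). *)
Lemma not_below_act (b : A) (σ : 'S_n) :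
  b != \bot -> exists2 x, X x & ~~ (b <= act s σ x).
Proof.
move=> nb; apply: NNPP => Hn.
have below x : X x -> b <= act s σ x by move=> Xx; apply/negPn/negP => H; apply: Hn; exists x.
have bot_inv : act s σ^-1 b = \bot.
  by apply: hX => x /below /(act_mono hTA σ^-1); rewrite actK.
by move: nb; rewrite -(actKV hTA σ b) bot_inv act_bot ?eqxx.
Qed.

Definition good (a : A) : Prop :=
  a != \bot /\ forall σ : 'S_n, exists2 x, X x & a <= ~` act s σ x.

Lemma good_below_list (b : A) (l : seq 'S_n) : b != \bot ->
  exists2 a, a != \bot /\ a <= b &
    forall σ, σ \in l -> exists2 x, X x & a <= ~` act s σ x.
Proof.
move=> nb; elim: l => [|σ l [a1 [na1 a1b] IH]]; first by exists b.
have [x Xx notle] := not_below_act σ na1.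
exists (a1 `&` ~` act s σ x).
  by rewrite meet_compl_eq0 notle (le_trans (leIl _ _) a1b).
move=> τ; rewrite in_cons => /orP[/eqP -> | /IH [y Xy le_y]]; first by exists x; rewrite ?leIr.
by exists y; rewrite // (le_trans (leIl _ _) le_y).
Qed.

Lemma good_below (b : A) : b != \bot -> exists2 a, good a & a <= b.
Proof.
move=> /(good_below_list (enum {perm 'I_n})) [a [na ab] H].
by exists a => //; split=> // σ; apply: H; rewrite mem_enum.
Qed.

End GoodElements.

Section Representation.

Variables (n : nat) (d : Order.disp_t) (A : ctbDistrLatticeType d)
  (s : 'I_n -> 'I_n -> A -> A).
Hypothesis hTA : is_TA s.
Variables (g : A -> nat) (X : A -> Prop).
Hypotheses (hg : injective g) (hX : inf_is_bot X).
Variable k0 : 'I_n.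

Definition U : Type := (A * 'I_n)%type.

Definition at_point (a : A) (σ : 'S_n) (q : 'I_n -> U) : Prop :=
  forall k, q k = (a, σ k).

Definition V (q : 'I_n -> U) : Prop :=
  exists a σ, good s X a /\ at_point a σ q.

Definition f (c : A) (q : 'I_n -> U) : Prop :=
  exists a σ, [/\ good s X a, at_point a σ q & UF g a (act s σ c)].

(* Since n > 0, a point determines its label a and its permutation σ. *)
Lemma at_point_uniq (q : 'I_n -> U) (a a' : A) (σ σ' : 'S_n) :
  at_point a σ q -> at_point a' σ' q -> a' = a /\ σ' = σ.
Proof.
move=> H1 H2; have E k : (a, σ k) = (a', σ' k) by rewrite -H1 -H2.
by split; [case: (E k0) | apply/permP => k; case: (E k)].
Qed.

Lemma f_V (c : A) (q : 'I_n -> U) : f c q -> V q.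
Proof. by case=> a [σ [ga pt _]]; exists a, σ. Qed.

Lemma f_at (a : A) (σ : 'S_n) (c : A) (q : 'I_n -> U) :
  good s X a -> at_point a σ q -> f c q <-> UF g a (act s σ c).
Proof.
move=> ga pt; split=> [[a' [σ' [_ pt' H]]] | H]; last by exists a, σ.
by have [-> ->] := at_point_uniq pt' pt.
Qed.

Lemma at_point_tperm (a : A) (σ : 'S_n) (q : 'I_n -> U) (i j : 'I_n) :
  at_point a σ q -> at_point a (tperm i j * σ) (fun k => q (tperm i j k)).
Proof. by move=> pt k; rewrite pt permM. Qed.

Lemma V_permutable : permutable V.
Proof.
by move=> q [a [σ [ga pt]]] i j _; exists a, (tperm i j * σ)%g; split; last exact: at_point_tperm.
Qed.

Lemma f_hom : hom_to_wp s V f.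
Proof.
split; [exact: f_V | split; [|split]].
- move=> c c' q; have [[a [σ [ga pt]]] | nV] := classic (V q).
    by rewrite !(f_at _ ga pt) (act_meet hTA) UF_meet.
  by split=> [/f_V | [/f_V]].
- move=> c q; have [Vq | nV] := classic (V q); last by split=> [/f_V | []].
  have [a [σ [ga pt]]] := Vq.
  by rewrite !(f_at _ ga pt) (act_compl hTA) (UF_compl hg _ ga.1); tauto.
- move=> i j hij c q; have [Vq | nV] := classic (V q); last by split=> [/f_V | []].
  have [a [σ [ga pt]]] := Vq.
  rewrite (f_at _ ga pt) (f_at _ ga (at_point_tperm i j pt)) (act_tperm hTA) //.
  tauto.
Qed.

(* The point (a, id) with a good below c - c' lies in f(c) but not in f(c'). *)
Lemma f_separates (c c' : A) : ~~ (c <= c') -> ~ (forall q, f c q <-> f c' q).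
Proof.
rewrite -meet_compl_eq0 => /(good_below hTA hX) [a ga a_le] H.
have pt : at_point a 1 (fun k => (a, k)) by move=> k; rewrite perm1.
have /H : f c (fun k => (a, k)).
  by apply/(f_at _ ga pt); rewrite (act1 hTA); apply: UF_base; apply: le_trans a_le (leIl _ _).
rewrite (f_at _ ga pt) (act1 hTA); apply/(UF_compl hg c' ga.1).
by apply: UF_base; apply: le_trans a_le (leIr _ _).
Qed.

Lemma f_injective : injective_wp f.
Proof.
move=> c c' H; apply/le_anti/andP; split; apply: contraT => /f_separates //.
by case=> q; split=> /H.
Qed.

(* A point (a, σ) misses t_σ x for the x ∈ X that the goodness of a provides. *)
Lemma f_omits_X (q : 'I_n -> U) : ~ (V q /\ forall x, X x -> f x q).
Proof.
case=> [[a [σ [ga pt]]] Hall]; have [x Xx a_le] := ga.2 σ.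
have := Hall x Xx; rewrite (f_at _ ga pt); apply/(UF_compl hg _ ga.1).
exact: UF_base.
Qed.

End Representation.

Local Close Scope order_scope.

Theorem corollary3p20 (n : nat) (hn : 2 <= n) (d : Order.disp_t)
  (A : ctbDistrLatticeType d) (s : 'I_n -> 'I_n -> A -> A)
  (hTA : is_TA s) (hcount : countable_type A)
  (X : A -> Prop) (hX : inf_is_bot X) :
  exists (U : Type) (V : ('I_n -> U) -> Prop) (f : A -> ('I_n -> U) -> Prop),
    permutable V /\ hom_to_wp s V f /\ injective_wp f /\
    (forall q, ~ (V q /\ forall x, X x -> f x q)).
Proof.
have [g hg] := hcount.
have k0 : 'I_n by exact: Ordinal (ltnW hn).
exists (U n A), (V s X), (f s g X); split; first exact: V_permutable.
split; first exact: (f_hom hTA X hg k0).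
split; [exact: (f_injective hTA hg hX k0) | exact: (f_omits_X hg k0)].
Qed.
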